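(* Let $p$ be a probability rule for quantum many-worlds theory satisfying Axioms (A1)–(A3). Let $v=\sum_{n=0}^{N-1}\sqrt{m_n/M}\,\lvert n\rangle$, where $m_0,\dots,m_{N-1}$ and $M$ are positive integers with $\sum_{n=0}^{N-1}m_n=M$, so that $v$ is an allowed state. Then $p_n(v)=m_n/M$ for $0\le n<N$, and $p_n(v)=0$ for $n\ge N$.
   Context: Quantum many-worlds theory is defined as follows. The worlds are the vectors $\lvert n\rangle$, $n\in\{0,1,2,\dots\}$, of a countably infinite orthonormal basis of a complex Hilbert space. The allowed states are the vectors $v=\sum_n v_n\lvert n\rangle$ with $\sum_n|v_n|^2=1$, where $v_n=\langle n\vert v\rangle$ is the amplitude of world $n$. The allowed transformations are all unitary operators $T$, with matrix elements $T_{ij}=\langle i\rvert T\lvert j\rangle$. A probability rule assigns to each allowed state $v$ a sequence $(p_n(v))_{n\ge 0}$ of nonnegative reals with $\sum_n p_n(v)=1$. The axioms are: (A1) Present state dependence: $p_n$ depends only on the present state $v$, so $p$ is a function of the state alone. (A2) Weak connection with amplitudes: for every allowed state $v$, $v_n=0$ implies $p_n(v)=0$. (A3) Weak connection with transformations: for every allowed state $v$ and allowed transformation $T$, and every partition of $\{0,1,2,\dots\}$ into subsets $\mathcal S_k$ such that $T_{ij}=0$ whenever $i$ and $j$ lie in different subsets, we have $\sum_{n\in\mathcal S_k}p_n(v)=\sum_{n\in\mathcal S_k}p_n(Tv)$ for every $k$. *)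

From Stdlib Require Import Reals List Arith.
From Coquelicot Require Import Coquelicot.
Open Scope R_scope.

(* A vector of the Hilbert space, written in the world basis |n>: v n = <n|v>. *)
Definition vec := nat -> C.

Definition ket (j : nat) : vec := fun i => if Nat.eqb i j then RtoC 1 else RtoC 0.

Definition is_l2 (v : vec) : Prop := ex_series (fun n => (Cmod (v n))^2).

Definition normsq (v : vec) : R := Series (fun n => (Cmod (v n))^2).

Definition is_state (v : vec) : Prop := is_series (fun n => (Cmod (v n))^2) 1.

(* Allowed transformations: unitary operators on l^2, i.e. linear maps
   l^2 -> l^2 which preserve the norm and are surjective onto l^2.
   (Values of T outside l^2 are irrelevant.) *)
Definition unitary (T : vec -> vec) : Prop :=
  (forall v, is_l2 v -> is_l2 (T v)) /\
  (forall u w (a b : C), is_l2 u -> is_l2 w ->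
     forall n, T (fun i => Cplus (Cmult a (u i)) (Cmult b (w i))) n
               = Cplus (Cmult a (T u n)) (Cmult b (T w n))) /\
  (forall v, is_l2 v -> normsq (T v) = normsq v) /\
  (forall w, is_l2 w -> exists v, is_l2 v /\ forall n, T v n = w n).

Definition mat_el (T : vec -> vec) (i j : nat) : C := T (ket j) i.

(* A probability rule: to each allowed state a sequence of nonnegative reals
   summing to 1.  (A1) is built in: p is a function of the present state. *)
Definition prob_rule (p : vec -> nat -> R) : Prop :=
  forall v, is_state v -> (forall n, 0 <= p v n) /\ is_series (p v) 1.

Definition axiom_A2 (p : vec -> nat -> R) : Prop :=
  forall v, is_state v -> forall n, v n = RtoC 0 -> p v n = 0.

(* (A3): a partition of N into subsets S_k is given by a block-labelling
   kappa : nat -> nat, with S_k = kappa^{-1}(k). *)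
Definition axiom_A3 (p : vec -> nat -> R) : Prop :=
  forall (v : vec) (T : vec -> vec) (kappa : nat -> nat),
    is_state v -> unitary T ->
    (forall i j, kappa i <> kappa j -> mat_el T i j = RtoC 0) ->
    forall k,
      Series (fun n => if Nat.eqb (kappa n) k then p v n else 0)
      = Series (fun n => if Nat.eqb (kappa n) k then p (T v) n else 0).

Definition sqrt_state (N : nat) (m : nat -> nat) (M : nat) : vec :=
  fun n => if Nat.ltb n N then RtoC (sqrt (INR (m n) / INR M)) else RtoC 0.

From Stdlib Require Import Reals List Arith Lia Lra FunctionalExtensionality.
From Coquelicot Require Import Coquelicot.
Open Scope R_scope.

(* The only transformations used are pair reflections: for worlds i <> j and
   c^2 + s^2 = 1, the map acting on span(|i>, |j>) by [[c, s], [s, -c]] and as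
   the identity elsewhere.  It is unitary and block diagonal for the partition
   {i, j} + singletons, so (A3) says it preserves p_i + p_j and every other p_n.
   - With c = 0, s = 1 (a transposition) and an empty auxiliary world, (A2)
     and (A3) show that two worlds of equal amplitude have equal probability.
   - A state with integer weights k_n (amplitudes sqrt (k_n / M)) whose weights
     are all 0 or 1 therefore gives probability 1/M to each occupied world.
   - A suitable pair reflection moves one unit of weight from a world into an
     empty one; (A3) then shows that p_a = k_a / M follows from the same fact
     for the split state.  Induction on the excess sum_n (k_n - 1) concludes. *)

Fixpoint rsum (f : nat -> R) (B : nat) : R :=
  match B with O => 0 | S B' => rsum f B' + f B' end.

Lemma sum_n_rsum (f : nat -> R) (n : nat) : sum_n f n = rsum f (S n).
Proof.
  induction n as [|n IH].
  - rewrite sum_O; simpl; ring.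
  - rewrite sum_Sn, IH; reflexivity.
Qed.

Lemma is_series_finite (f : nat -> R) (B : nat) :
  (forall n, (B <= n)%nat -> f n = 0) -> is_series f (rsum f B).
Proof.
  intros Hf.
  assert (Hstable : forall n, (B <= n)%nat -> rsum f n = rsum f B).
  { intros n Hn; induction Hn as [|n Hn IH]; [reflexivity|].
    simpl; rewrite IH, (Hf n Hn); ring. }
  apply filterlim_ext_loc with (f := fun _ => rsum f B).
  - exists B; intros n Hn. rewrite sum_n_rsum; symmetry; apply Hstable; lia.
  - apply filterlim_const.
Qed.

Definition single (i : nat) (a : R) : nat -> R :=
  fun n => if n =? i then a else 0.

Lemma rsum_single (i : nat) (a : R) (B : nat) :
  rsum (single i a) B = if (i <? B)%nat then a else 0.
Proof.
  induction B as [|B IH]; [reflexivity|]. simpl; rewrite IH; unfold single.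
  destruct (Nat.ltb_spec i B), (Nat.ltb_spec i (S B)), (Nat.eqb_spec B i); lia || ring.
Qed.

Lemma is_series_single (i : nat) (a : R) : is_series (single i a) a.
Proof.
  replace a with (rsum (single i a) (S i)) at 2.
  - apply is_series_finite; intros n Hn; unfold single.
    destruct (Nat.eqb_spec n i); [lia | reflexivity].
  - rewrite rsum_single; destruct (Nat.ltb_spec i (S i)); [reflexivity | lia].
Qed.

Lemma is_series_rebalance (f g : nat -> R) (l : R) (i j : nat) : i <> j ->
  (forall n, n <> i -> n <> j -> g n = f n) -> g i + g j = f i + f j ->
  is_series f l -> is_series g l.
Proof.
  intros Hij Hout Hpair Hf.
  pose proof (is_series_plus _ _ _ _ (is_series_plus _ _ _ _ Hf
    (is_series_single i (g i - f i))) (is_series_single j (g j - f j))) as H.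
  replace l with (l + (g i - f i) + (g j - f j)) by lra.
  apply (is_series_ext _ g) in H; [exact H|].
  intros n; change plus with Rplus; unfold single.
  destruct (Nat.eqb_spec n i), (Nat.eqb_spec n j); subst; try lia.
  - lra.
  - lra.
  - rewrite (Hout n) by assumption. lra.
Qed.

Definition reflect_pair (i j : nat) (c s : R) (v : vec) : vec := fun n =>
  if n =? i then (c * v i + s * v j)%C
  else if n =? j then (s * v i - c * v j)%C
  else v n.

Lemma reflect_pair_at_i (i j : nat) (c s : R) (v : vec) :
  reflect_pair i j c s v i = (c * v i + s * v j)%C.
Proof. unfold reflect_pair; now rewrite Nat.eqb_refl. Qed.

Lemma reflect_pair_at_j (i j : nat) (c s : R) (v : vec) : i <> j ->
  reflect_pair i j c s v j = (s * v i - c * v j)%C.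
Proof.
  intros Hij; unfold reflect_pair; rewrite Nat.eqb_refl.
  destruct (Nat.eqb_spec j i); [lia | reflexivity].
Qed.

Lemma reflect_pair_other (i j : nat) (c s : R) (v : vec) (n : nat) :
  n <> i -> n <> j -> reflect_pair i j c s v n = v n.
Proof.
  intros Hi Hj; unfold reflect_pair.
  destruct (Nat.eqb_spec n i), (Nat.eqb_spec n j); [lia | lia | lia | reflexivity].
Qed.

Lemma Cmod_sq (z : C) : Cmod z ^ 2 = fst z ^ 2 + snd z ^ 2.
Proof. unfold Cmod; rewrite pow2_sqrt; [reflexivity | nra]. Qed.

Lemma reflect_pair_norm2 (c s : R) (a b : C) : c ^ 2 + s ^ 2 = 1 ->
  Cmod (c * a + s * b)%C ^ 2 + Cmod (s * a - c * b)%C ^ 2 = Cmod a ^ 2 + Cmod b ^ 2.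
Proof.
  intros Hcs; rewrite !Cmod_sq; destruct a as [a1 a2], b as [b1 b2]; simpl.
  transitivity ((c ^ 2 + s ^ 2) * (a1 ^ 2 + a2 ^ 2 + b1 ^ 2 + b2 ^ 2)); [ring|].
  rewrite Hcs; ring.
Qed.

Lemma reflect_pair_sq_series (i j : nat) (c s : R) (v : vec) (l : R) :
  i <> j -> c ^ 2 + s ^ 2 = 1 ->
  is_series (fun n => Cmod (v n) ^ 2) l ->
  is_series (fun n => Cmod (reflect_pair i j c s v n) ^ 2) l.
Proof.
  intros Hij Hcs. apply is_series_rebalance with i j; [exact Hij | |].
  - intros n Hi Hj; now rewrite reflect_pair_other.
  - rewrite reflect_pair_at_i, reflect_pair_at_j by exact Hij.
    now apply reflect_pair_norm2.
Qed.

Lemma reflect_pair_involutive (i j : nat) (c s : R) (v : vec) (n : nat) :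
  i <> j -> c ^ 2 + s ^ 2 = 1 -> reflect_pair i j c s (reflect_pair i j c s v) n = v n.
Proof.
  intros Hij Hcs.
  unfold reflect_pair at 1; rewrite reflect_pair_at_i, reflect_pair_at_j by exact Hij.
  destruct (Nat.eqb_spec n i), (Nat.eqb_spec n j); subst; try lia.
  - destruct (v i) as [a1 a2], (v j) as [b1 b2].
    apply injective_projections; simpl;
      match goal with |- _ = ?r =>
        transitivity ((c ^ 2 + s ^ 2) * r); [ring | rewrite Hcs; ring] end.
  - destruct (v i) as [a1 a2], (v j) as [b1 b2].
    apply injective_projections; simpl;
      match goal with |- _ = ?r =>
        transitivity ((c ^ 2 + s ^ 2) * r); [ring | rewrite Hcs; ring] end.
  - now apply reflect_pair_other.
Qed.

Lemma reflect_pair_unitary (i j : nat) (c s : R) :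
  i <> j -> c ^ 2 + s ^ 2 = 1 -> unitary (reflect_pair i j c s).
Proof.
  intros Hij Hcs. repeat split.
  - intros v [l Hl]. exists l. now apply reflect_pair_sq_series.
  - intros u w a b _ _ n. unfold reflect_pair.
    destruct (n =? i), (n =? j); ring.
  - intros v [l Hl]. unfold normsq. rewrite (is_series_unique _ _ Hl).
    apply is_series_unique. now apply reflect_pair_sq_series.
  - intros w [l Hl]. exists (reflect_pair i j c s w). split.
    + exists l. now apply reflect_pair_sq_series.
    + intros n. now apply reflect_pair_involutive.
Qed.

Definition pair_label (i j : nat) (n : nat) : nat := if n =? j then i else n.

Lemma reflect_pair_block_diagonal (i j : nat) (c s : R) : i <> j ->
  forall x y, pair_label i j x <> pair_label i j y -> mat_el (reflect_pair i j c s) x y = RtoC 0.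
Proof.
  intros Hij x y Hxy. unfold mat_el, pair_label, reflect_pair, ket in *.
  destruct (Nat.eqb_spec x j), (Nat.eqb_spec y j), (Nat.eqb_spec x i), (Nat.eqb_spec y i);
    subst; try lia;
    repeat match goal with |- context [?a =? ?b] => destruct (Nat.eqb_spec a b); try lia end;
    ring.
Qed.

Lemma Series_pair_block (w : nat -> R) (i j : nat) : i <> j ->
  Series (fun n => if pair_label i j n =? i then w n else 0) = w i + w j.
Proof.
  intros Hij. apply is_series_unique.
  apply (is_series_ext (fun n => plus (single i (w i) n) (single j (w j) n))).
  - intros n; change plus with Rplus; unfold single, pair_label.
    destruct (Nat.eqb_spec n i), (Nat.eqb_spec n j); subst; rewrite ?Nat.eqb_refl; try lia.
    + lra.
    + lra.
    + destruct (Nat.eqb_spec n i); [lia | lra].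
  - exact (is_series_plus _ _ _ _ (is_series_single i (w i)) (is_series_single j (w j))).
Qed.

Lemma Series_singleton_block (w : nat -> R) (i j k : nat) : k <> i -> k <> j ->
  Series (fun n => if pair_label i j n =? k then w n else 0) = w k.
Proof.
  intros Hi Hj. apply is_series_unique.
  apply (is_series_ext (single k (w k))); [|apply is_series_single].
  intros n; unfold single, pair_label.
  destruct (Nat.eqb_spec n j); subst.
  - destruct (Nat.eqb_spec j k), (Nat.eqb_spec i k); lia || reflexivity.
  - destruct (Nat.eqb_spec n k); subst; reflexivity.
Qed.

Lemma A3_reflect_pair (p : vec -> nat -> R) (v : vec) (i j : nat) (c s : R) :
  axiom_A3 p -> is_state v -> i <> j -> c ^ 2 + s ^ 2 = 1 ->
  p v i + p v j = p (reflect_pair i j c s v) i + p (reflect_pair i j c s v) j /\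
  (forall k, k <> i -> k <> j -> p v k = p (reflect_pair i j c s v) k).
Proof.
  intros A3 Hv Hij Hcs.
  pose proof (A3 v (reflect_pair i j c s) (pair_label i j) Hv
    (reflect_pair_unitary i j c s Hij Hcs) (reflect_pair_block_diagonal i j c s Hij)) as H.
  split.
  - specialize (H i). now rewrite !Series_pair_block in H.
  - intros k Hi Hj. specialize (H k). now rewrite !(Series_singleton_block _ i j k) in H.
Qed.

Lemma reflect_pair_state (v : vec) (i j : nat) (c s : R) :
  is_state v -> i <> j -> c ^ 2 + s ^ 2 = 1 -> is_state (reflect_pair i j c s v).
Proof. intros Hv Hij Hcs. now apply reflect_pair_sq_series. Qed.

Lemma cos_sin_swap : 0 ^ 2 + 1 ^ 2 = 1.
Proof. ring. Qed.

Definition swap (a b : nat) : vec -> vec := reflect_pair a b 0 1.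

Lemma swap_spec (a b : nat) (v : vec) (n : nat) :
  swap a b v n = if n =? a then v b else if n =? b then v a else v n.
Proof. unfold swap, reflect_pair. destruct (n =? a), (n =? b); ring. Qed.

Lemma swap_into_empty (p : vec -> nat -> R) (v : vec) (a z : nat) :
  axiom_A2 p -> axiom_A3 p -> is_state v -> a <> z -> v z = RtoC 0 ->
  p v a = p (swap a z v) z.
Proof.
  intros A2 A3 Hv Haz Hz.
  destruct (A3_reflect_pair p v a z 0 1 A3 Hv Haz cos_sin_swap) as [Hblock _].
  fold (swap a z v) in Hblock.
  assert (Hswapped : p (swap a z v) a = 0).
  { apply A2; [now apply reflect_pair_state; [| | apply cos_sin_swap] |].
    now rewrite swap_spec, Nat.eqb_refl. }
  rewrite (A2 v Hv z Hz), Hswapped in Hblock. lra.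
Qed.

Lemma equal_amplitudes (p : vec -> nat -> R) (v : vec) (a b z : nat) :
  axiom_A2 p -> axiom_A3 p -> is_state v ->
  a <> b -> a <> z -> b <> z -> v a = v b -> v z = RtoC 0 -> p v a = p v b.
Proof.
  intros A2 A3 Hv Hab Haz Hbz Heq Hz.
  rewrite (swap_into_empty p v a z), (swap_into_empty p v b z) by assumption.
  assert (Hcompose : swap a b (swap a z v) = swap b z v).
  { apply functional_extensionality; intros n. rewrite !swap_spec.
    repeat match goal with |- context [?x =? ?y] => destruct (Nat.eqb_spec x y); subst end;
      congruence || lia. }
  destruct (A3_reflect_pair p (swap a z v) a b 0 1 A3
    (reflect_pair_state v a z 0 1 Hv Haz cos_sin_swap) Hab cos_sin_swap) as [_ Hother].
  fold (swap a b (swap a z v)) in Hother. rewrite Hcompose in Hother.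
  apply Hother; congruence.
Qed.

Fixpoint nsum (k : nat -> nat) (B : nat) : nat :=
  match B with O => O | S B' => (nsum k B' + k B')%nat end.

Definition upd (k : nat -> nat) (a y : nat) : nat -> nat :=
  fun n => if n =? a then y else k n.

Lemma nsum_ext (f g : nat -> nat) (B : nat) :
  (forall n, (n < B)%nat -> f n = g n) -> nsum f B = nsum g B.
Proof. induction B as [|B IH]; simpl; intros H; [reflexivity|]. rewrite IH, H; auto. Qed.

Lemma nsum_upd (k : nat -> nat) (a y B : nat) : (a < B)%nat ->
  (nsum (upd k a y) B + k a = nsum k B + y)%nat.
Proof.
  induction B as [|B IH]; simpl; intros Ha; [lia|]. unfold upd at 2.
  destruct (Nat.eqb_spec B a); subst.
  - rewrite (nsum_ext (upd k a y) k); [lia|].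
    intros n Hn; unfold upd; destruct (Nat.eqb_spec n a); [lia | reflexivity].
  - specialize (IH ltac:(lia)). lia.
Qed.

Lemma nsum_upd_last (k : nat -> nat) (B y : nat) :
  nsum (upd k B y) (S B) = (nsum k B + y)%nat.
Proof.
  simpl; unfold upd at 2; rewrite Nat.eqb_refl. f_equal. apply nsum_ext.
  intros n Hn; unfold upd; destruct (Nat.eqb_spec n B); [lia | reflexivity].
Qed.

Lemma nsum_pos (k : nat -> nat) (B : nat) :
  (0 < nsum k B)%nat -> exists n, (n < B)%nat /\ (0 < k n)%nat.
Proof.
  induction B as [|B IH]; simpl; intros H; [lia|].
  destruct (Nat.eq_dec (k B) 0) as [HB|HB].
  - destruct IH as [n [Hn Hk]]; [lia|]. exists n; split; [lia | exact Hk].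
  - exists B; split; lia.
Qed.

Lemma nsum_zero (k : nat -> nat) (B : nat) :
  nsum k B = 0%nat -> forall n, (n < B)%nat -> k n = 0%nat.
Proof.
  induction B as [|B IH]; simpl; intros H n Hn; [lia|].
  destruct (Nat.eq_dec n B); subst; [lia | apply IH; lia].
Qed.

Lemma nsum_list_sum (k : nat -> nat) (B : nat) : nsum k B = list_sum (map k (seq 0 B)).
Proof.
  induction B as [|B IH]; [reflexivity|].
  rewrite seq_S, map_app, list_sum_app, <- IH; simpl; lia.
Qed.

Lemma is_series_weights (k : nat -> nat) (B : nat) :
  (forall n, (B <= n)%nat -> k n = 0%nat) -> is_series (fun n => INR (k n)) (INR (nsum k B)).
Proof.
  intros Hk.
  replace (INR (nsum k B)) with (rsum (fun n => INR (k n)) B).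
  - apply is_series_finite; intros n Hn; now rewrite Hk.
  - clear Hk; induction B as [|B IH]; [reflexivity|].
    simpl; rewrite plus_INR, IH; reflexivity.
Qed.

Definition weight_state (M : nat) (k : nat -> nat) : vec :=
  fun n => RtoC (sqrt (INR (k n) / INR M)).

Lemma weight_state_zero (M : nat) (k : nat -> nat) (n : nat) :
  k n = 0%nat -> weight_state M k n = RtoC 0.
Proof. intros H. unfold weight_state. rewrite H; simpl. unfold Rdiv. now rewrite Rmult_0_l, sqrt_0. Qed.

Lemma weight_state_is_state (M : nat) (k : nat -> nat) (B : nat) : (0 < M)%nat ->
  (forall n, (B <= n)%nat -> k n = 0%nat) -> nsum k B = M -> is_state (weight_state M k).
Proof.
  intros HM Hk Hsum. assert (HM' : 0 < INR M) by (apply lt_0_INR; exact HM).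
  pose proof (is_series_scal_r (/ INR M) _ _ (is_series_weights k B Hk)) as H.
  rewrite Hsum, Rinv_r in H by lra.
  revert H; apply is_series_ext; intros n; unfold weight_state; rewrite Cmod_sq; simpl.
  rewrite Rmult_0_l, Rplus_0_r, Rmult_1_r, sqrt_sqrt; [reflexivity|].
  apply Rmult_le_pos; [apply pos_INR | apply Rlt_le, Rinv_0_lt_compat, HM'].
Qed.

(* Base case: when every weight is 0 or 1, all occupied worlds have the same
   amplitude, hence the same probability, which must then be 1/M. *)
Lemma born_unit_weights (p : vec -> nat -> R) (M : nat) (k : nat -> nat) (B : nat) :
  prob_rule p -> axiom_A2 p -> axiom_A3 p -> (0 < M)%nat ->
  (forall n, (B <= n)%nat -> k n = 0%nat) -> nsum k B = M ->
  (forall n, (k n <= 1)%nat) ->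
  forall n, p (weight_state M k) n = INR (k n) / INR M.
Proof.
  intros PR A2 A3 HM Hk Hsum Hunit n.
  assert (HM' : 0 < INR M) by (apply lt_0_INR; exact HM).
  set (v := weight_state M k).
  assert (Hv : is_state v) by (eapply weight_state_is_state; eauto).
  assert (Hempty : forall x, k x = 0%nat -> p v x = 0).
  { intros x Hx. apply A2; [exact Hv|]. now apply weight_state_zero. }
  destruct (Nat.eq_dec (k n) 0) as [Hn0|Hn0].
  { rewrite Hempty, Hn0 by exact Hn0. simpl. unfold Rdiv; ring. }
  assert (Hn1 : k n = 1%nat) by (specialize (Hunit n); lia).
  assert (HnB : (n < B)%nat) by (destruct (Nat.lt_ge_cases n B); [assumption | rewrite Hk in Hn0; lia]).
  assert (Hall : forall x, p v x = INR (k x) * p v n).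
  { intros x. destruct (Nat.eq_dec (k x) 0) as [Hx0|Hx0].
    - rewrite Hempty, Hx0 by exact Hx0. simpl; ring.
    - assert (Hx1 : k x = 1%nat) by (specialize (Hunit x); lia).
      assert (HxB : (x < B)%nat) by (destruct (Nat.lt_ge_cases x B); [assumption | rewrite Hk in Hx0; lia]).
      rewrite Hx1; simpl; rewrite Rmult_1_l.
      destruct (Nat.eq_dec x n) as [->|Hxn]; [reflexivity|].
      apply (equal_amplitudes p v x n B A2 A3 Hv); try lia.
      + unfold v, weight_state. now rewrite Hx1, Hn1.
      + apply weight_state_zero, Hk; lia. }
  destruct (PR v Hv) as [_ Htotal].
  pose proof (is_series_scal_r (p v n) _ _ (is_series_weights k B Hk)) as Hweighted.
  apply (is_series_ext _ (p v)) in Hweighted; [|intros x; symmetry; apply Hall].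
  pose proof (is_series_unique _ _ Hweighted) as H1.
  rewrite (is_series_unique _ _ Htotal), Hsum in H1.
  rewrite Hn1; simpl INR; rewrite H1; field; lra.
Qed.

(* Cosine and sine of the reflection that splits one unit off a weight K >= 1. *)
Definition split_cos (K : R) : R := sqrt ((K - 1) / K).
Definition split_sin (K : R) : R := sqrt (1 / K).

Lemma split_coeffs (K : R) : 1 <= K -> split_cos K ^ 2 + split_sin K ^ 2 = 1.
Proof.
  intros HK. unfold split_cos, split_sin.
  rewrite !pow2_sqrt; [field; lra | |]; apply Rmult_le_pos; try lra;
    apply Rlt_le, Rinv_0_lt_compat; lra.
Qed.

Lemma sqrt_div_mult (x y z : R) : 0 <= x -> 0 < y -> 0 < z ->
  sqrt (x / y) * sqrt (y / z) = sqrt (x / z).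
Proof.
  intros Hx Hy Hz. rewrite <- sqrt_mult.
  - f_equal; field; lra.
  - apply Rmult_le_pos; [lra | apply Rlt_le, Rinv_0_lt_compat; lra].
  - apply Rmult_le_pos; [lra | apply Rlt_le, Rinv_0_lt_compat; lra].
Qed.

Lemma reflect_pair_splits_unit (M : nat) (k : nat -> nat) (a b : nat) :
  (0 < M)%nat -> a <> b -> k b = 0%nat -> (1 <= k a)%nat ->
  reflect_pair a b (split_cos (INR (k a))) (split_sin (INR (k a))) (weight_state M k)
  = weight_state M (upd (upd k a (k a - 1)) b 1).
Proof.
  intros HM Hab Hb Ha.
  assert (HM' : 0 < INR M) by (apply lt_0_INR; exact HM).
  assert (HK : 1 <= INR (k a)) by (replace 1 with (INR 1) by reflexivity; apply le_INR; exact Ha).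
  apply functional_extensionality; intros x.
  unfold split_cos, split_sin, upd.
  destruct (Nat.eqb_spec x a) as [->|Hxa]; [|destruct (Nat.eqb_spec x b) as [->|Hxb]].
  - rewrite reflect_pair_at_i, (weight_state_zero M k b Hb).
    unfold weight_state at 1 2; rewrite Nat.eqb_refl.
    destruct (Nat.eqb_spec a b) as [|_]; [contradiction|].
    rewrite minus_INR by exact Ha; simpl INR.
    rewrite <- (sqrt_div_mult (INR (k a) - 1) (INR (k a)) (INR M)) by lra.
    rewrite RtoC_mult; ring.
  - rewrite reflect_pair_at_j, (weight_state_zero M k b Hb) by exact Hab.
    unfold weight_state at 1 2; rewrite Nat.eqb_refl; simpl INR.
    rewrite <- (sqrt_div_mult 1 (INR (k a)) (INR M)) by lra.
    rewrite RtoC_mult; ring.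
  - rewrite reflect_pair_other by assumption. unfold weight_state.
    destruct (Nat.eqb_spec x b), (Nat.eqb_spec x a); [lia | lia | lia | reflexivity].
Qed.

Lemma born_split_step (p : vec -> nat -> R) (M : nat) (k : nat -> nat) (a b : nat) :
  axiom_A2 p -> axiom_A3 p -> (0 < M)%nat -> is_state (weight_state M k) ->
  a <> b -> k b = 0%nat -> (1 <= k a)%nat ->
  (forall n, p (weight_state M (upd (upd k a (k a - 1)) b 1)) n
             = INR (upd (upd k a (k a - 1)) b 1 n) / INR M) ->
  forall n, p (weight_state M k) n = INR (k n) / INR M.
Proof.
  intros A2 A3 HM Hv Hab Hb Ha Hsplit.
  assert (HM' : 0 < INR M) by (apply lt_0_INR; exact HM).
  assert (HK : 1 <= INR (k a)) by (replace 1 with (INR 1) by reflexivity; apply le_INR; exact Ha).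
  destruct (A3_reflect_pair p _ a b _ _ A3 Hv Hab (split_coeffs _ HK)) as [Hpair Hother].
  rewrite reflect_pair_splits_unit in Hpair, Hother by assumption.
  assert (Hpb : p (weight_state M k) b = 0) by (apply A2; [exact Hv | now apply weight_state_zero]).
  intros n. destruct (Nat.eq_dec n a) as [->|Hna]; [|destruct (Nat.eq_dec n b) as [->|Hnb]].
  - rewrite !Hsplit in Hpair. unfold upd in Hpair. rewrite !Nat.eqb_refl in Hpair.
    destruct (Nat.eqb_spec a b) as [|_]; [contradiction|].
    rewrite minus_INR in Hpair by exact Ha. simpl INR in Hpair.
    assert (Hpa : p (weight_state M k) a = (INR (k a) - 1) / INR M + 1 / INR M) by lra.
    rewrite Hpa; field; lra.
  - rewrite Hpb, Hb; simpl; unfold Rdiv; ring.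
  - rewrite Hother, Hsplit by assumption. unfold upd.
    destruct (Nat.eqb_spec n b), (Nat.eqb_spec n a); [lia | lia | lia | reflexivity].
Qed.

(* The excess of k below B: total weight minus number of occupied worlds.
   Splitting off one unit into a fresh world lowers it by one. *)
Definition excess (k : nat -> nat) (B : nat) : nat := nsum (fun n => k n - 1)%nat B.

Lemma born_weight_state (p : vec -> nat -> R) (M : nat) :
  prob_rule p -> axiom_A2 p -> axiom_A3 p -> (0 < M)%nat ->
  forall D k B, excess k B = D -> (forall n, (B <= n)%nat -> k n = 0%nat) -> nsum k B = M ->
  forall n, p (weight_state M k) n = INR (k n) / INR M.
Proof.
  intros PR A2 A3 HM D. induction D as [|D IH]; intros k B HD Hk Hsum.
  - apply (born_unit_weights p M k B); try assumption.
    intros n. destruct (Nat.lt_ge_cases n B) as [HnB|HnB].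
    + pose proof (nsum_zero _ _ HD n HnB) as H0; cbv beta in H0; lia.
    + rewrite Hk by exact HnB; lia.
  - destruct (nsum_pos (fun n => k n - 1)%nat B) as [a [HaB Ha]];
      [unfold excess in HD; lia | cbv beta in Ha].
    assert (HkB : k B = 0%nat) by (apply Hk; lia).
    apply (born_split_step p M k a B A2 A3 HM);
      [eapply weight_state_is_state; eauto | lia | exact HkB | lia |].
    apply (IH _ (S B)).
    + unfold excess.
      rewrite (nsum_ext _ (upd (upd (fun n => k n - 1)%nat a (k a - 2)%nat) B 0)).
      * rewrite nsum_upd_last.
        pose proof (nsum_upd (fun n => k n - 1)%nat a (k a - 2)%nat B HaB).
        cbv beta in *; unfold excess in HD; lia.
      * intros n _; unfold upd.
        destruct (Nat.eqb_spec n B), (Nat.eqb_spec n a); lia.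
    + intros n Hn; unfold upd.
      destruct (Nat.eqb_spec n B), (Nat.eqb_spec n a); [lia | lia | lia | apply Hk; lia].
    + rewrite nsum_upd_last. pose proof (nsum_upd k a (k a - 1)%nat B HaB). lia.
Qed.

Theorem theorem1 (p : vec -> nat -> R) (N : nat) (m : nat -> nat) (M : nat) :
  prob_rule p -> axiom_A2 p -> axiom_A3 p ->
  (forall n, (n < N)%nat -> (0 < m n)%nat) -> (0 < M)%nat ->
  list_sum (map m (seq 0 N)) = M ->
  (forall n, (n < N)%nat -> p (sqrt_state N m M) n = INR (m n) / INR M) /\
  (forall n, (N <= n)%nat -> p (sqrt_state N m M) n = 0).
Proof.
  intros PR A2 A3 _ HM Hsum.
  set (k := fun n => if n <? N then m n else 0%nat).
  assert (Hstate : sqrt_state N m M = weight_state M k).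
  { apply functional_extensionality; intros x. unfold sqrt_state, weight_state, k.
    destruct (x <? N); [reflexivity|]. simpl; unfold Rdiv; now rewrite Rmult_0_l, sqrt_0. }
  assert (Hk : forall n, (N <= n)%nat -> k n = 0%nat).
  { intros n Hn; unfold k; destruct (Nat.ltb_spec n N); lia. }
  assert (Htotal : nsum k N = M).
  { rewrite nsum_list_sum, <- Hsum. f_equal. apply map_ext_in.
    intros n Hn; apply in_seq in Hn; unfold k; destruct (Nat.ltb_spec n N); lia. }
  pose proof (born_weight_state p M PR A2 A3 HM _ k N eq_refl Hk Htotal) as Hborn.
  rewrite Hstate; split; intros n Hn; rewrite Hborn; unfold k;
    destruct (Nat.ltb_spec n N); try lia; [reflexivity | simpl; unfold Rdiv; ring].
Qed.
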